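(* Let $G$ be a group and let $(\mu_i,\lambda_i)$, $i\in I\cup J$, be pairs of commuting elements of $G$ (with $I,J$ index sets). Let $j_0\in J$, let $p,q$ be relatively prime integers, and let $N$ be the normal subgroup of $G$ generated by $\mu_{j_0}^p\lambda_{j_0}^q$. Let $s_i\in\mathbb{RP}^1$ for $i\in I$ and $s_j\in\mathbb{QP}^1$ for $j\in J$ be slopes with $s_{j_0}=[p:q]$. Then the following are equivalent: (a) there is a left total preorder $\le_0$ on $G$ such that $s_i$ is weakly $\le_0$-detected with respect to $(\mu_i,\lambda_i)$ for every $i\in I$, and $s_j$ is strongly $\le_0$-detected with respect to $(\mu_j,\lambda_j)$ for every $j\in J$; (b) there is a left total preorder $\le$ on $G/N$ such that $s_i$ is weakly $\le$-detected with respect to $(\mu_iN,\lambda_iN)$ for every $i\in I$, and $s_j$ is strongly $\le$-detected with respect to $(\mu_jN,\lambda_jN)$ for every $j\in J\setminus\{j_0\}$.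
   Context: A left total preorder on a group $G$ is a binary relation $\le$ on $G$ that is reflexive, transitive, total ($x\le y$ or $y\le x$ for all $x,y$), left-invariant ($x\le y\Rightarrow gx\le gy$), and proper, i.e. not the trivial relation in which $x\le y$ for all $x,y$. Its residue group is $\{g\in G: g\le 1 \text{ and } 1\le g\}$. For commuting $\mu,\lambda\in G$, a slope $[x:y]\in\mathbb{RP}^1$ is weakly $\le$-detected with respect to $(\mu,\lambda)$ if $\mu^{p_2}\lambda^{q_2}\ge 1$ for all integers $p_1,q_1,p_2,q_2$ with $\mu^{p_1}\lambda^{q_1}\ge 1$ and $(p_1y-q_1x)(p_2y-q_2x)>0$. A slope $[p:q]\in\mathbb{QP}^1$ ($p,q$ relatively prime integers) is strongly $\le$-detected with respect to $(\mu,\lambda)$ if every conjugate of $\mu^p\lambda^q$ lies in the residue group of $\le$. *)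

From Stdlib Require Import ZArith Reals.

Set Implicit Arguments.

Record Group := {
  carrier :> Type;
  gmul : carrier -> carrier -> carrier;
  gone : carrier;
  ginv : carrier -> carrier;
  gmul_assoc : forall x y z, gmul x (gmul y z) = gmul (gmul x y) z;
  gmul_1l : forall x, gmul gone x = x;
  gmul_1r : forall x, gmul x gone = x;
  gmul_Vl : forall x, gmul (ginv x) x = gone;
  gmul_Vr : forall x, gmul x (ginv x) = gone
}.

Arguments gmul {g} _ _.
Arguments gone {g}.
Arguments ginv {g} _.

Definition gpow_pos {G : Group} (g : G) (n : positive) : G :=
  Pos.iter (fun h => gmul g h) gone n.

Definition gpow {G : Group} (g : G) (n : Z) : G :=
  match n with
  | Z0 => gone
  | Zpos m => gpow_pos g m
  | Zneg m => ginv (gpow_pos g m)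
  end.

Definition commute {G : Group} (x y : G) : Prop := gmul x y = gmul y x.

Definition left_total_preorder {G : Group} (le : G -> G -> Prop) : Prop :=
  (forall x, le x x) /\
  (forall x y z, le x y -> le y z -> le x z) /\
  (forall x y, le x y \/ le y x) /\
  (forall x y g, le x y -> le (gmul g x) (gmul g y)) /\
  (exists x y, ~ le x y).

Definition residue {G : Group} (le : G -> G -> Prop) (g : G) : Prop :=
  le g gone /\ le gone g.

(* Weak detection of the slope [x:y] in RP^1 (representative (x,y) <> (0,0)). *)
Definition weakly_detected {G : Group} (le : G -> G -> Prop) (mu lam : G)
    (s : R * R) : Prop :=
  let (x, y) := s in
  forall p1 q1 p2 q2 : Z,
    le gone (gmul (gpow mu p1) (gpow lam q1)) ->
    ((IZR p1 * y - IZR q1 * x) * (IZR p2 * y - IZR q2 * x) > 0)%R ->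
    le gone (gmul (gpow mu p2) (gpow lam q2)).

(* Strong detection of the slope [p:q] in QP^1 (p, q coprime integers). *)
Definition strongly_detected {G : Group} (le : G -> G -> Prop) (mu lam : G)
    (s : Z * Z) : Prop :=
  let (p, q) := s in
  forall g : G,
    residue le (gmul (gmul g (gmul (gpow mu p) (gpow lam q))) (ginv g)).

Definition subgroup {G : Group} (S : G -> Prop) : Prop :=
  S gone /\ (forall x y, S x -> S y -> S (gmul x y)) /\ (forall x, S x -> S (ginv x)).

Definition normal {G : Group} (S : G -> Prop) : Prop :=
  forall g x, S x -> S (gmul (gmul g x) (ginv g)).

Definition normal_closure {G : Group} (c : G) (g : G) : Prop :=
  forall S : G -> Prop, subgroup S -> normal S -> S c -> S g.

Definition group_hom {G H : Group} (f : G -> H) : Prop :=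
  forall x y, f (gmul x y) = gmul (f x) (f y).

Definition is_quotient_by_ncl {G H : Group} (pi : G -> H) (c : G) : Prop :=
  group_hom pi /\ (forall h : H, exists g, pi g = h) /\
  (forall g, pi g = gone <-> normal_closure c g).

From Stdlib Require Import ZArith Reals Classical.

(* The residue group of a left preorder is a subgroup, so if the conjugates of
   c = mu^p lam^q all lie in it (strong detection of [p:q]), so does the whole
   normal closure N of c.  The preorder is then constant on the cosets of N and
   descends to G/N, where it detects exactly the same slopes; conversely every
   left preorder on G/N pulls back to G, and [p:q] becomes strongly detected
   because c maps to 1. *)

Set Implicit Arguments.
Unset Strict Implicit.

Definition conjg {G : Group} (g x : G) : G := gmul (gmul g x) (ginv g).

Section GroupFacts.
Variable G : Group.
Implicit Types x y g h : G.

Lemma ginv_uniq x y : gmul x y = gone -> y = ginv x.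
Proof.
  intro E. rewrite <- (gmul_1l G y), <- (gmul_Vl G x), <- gmul_assoc, E, gmul_1r.
  reflexivity.
Qed.

Lemma invgK x : ginv (ginv x) = x.
Proof. symmetry. apply ginv_uniq, gmul_Vl. Qed.

Lemma invMg x y : ginv (gmul x y) = gmul (ginv y) (ginv x).
Proof.
  symmetry. apply ginv_uniq.
  rewrite <- gmul_assoc, (gmul_assoc G y), gmul_Vr, gmul_1l, gmul_Vr. reflexivity.
Qed.

Lemma invg1 : ginv (@gone G) = gone.
Proof. symmetry. apply ginv_uniq, gmul_1l. Qed.

Lemma mulKg x y : gmul (ginv x) (gmul x y) = y.
Proof. rewrite gmul_assoc, gmul_Vl, gmul_1l. reflexivity. Qed.

Lemma gpow_opp x n : gpow x (- n) = ginv (gpow x n).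
Proof.
  destruct n; simpl.
  - symmetry. apply invg1.
  - reflexivity.
  - symmetry. apply invgK.
Qed.

Lemma conjg1 g : conjg g gone = gone.
Proof. unfold conjg. rewrite gmul_1r, gmul_Vr. reflexivity. Qed.

Lemma conjgM g x y : conjg g (gmul x y) = gmul (conjg g x) (conjg g y).
Proof. unfold conjg. rewrite <- !gmul_assoc, mulKg. reflexivity. Qed.

Lemma conjgV g x : conjg g (ginv x) = ginv (conjg g x).
Proof. unfold conjg. rewrite !invMg, invgK, gmul_assoc. reflexivity. Qed.

Lemma conjg_mul g h x : conjg (gmul g h) x = conjg g (conjg h x).
Proof. unfold conjg. rewrite invMg, <- !gmul_assoc. reflexivity. Qed.

Lemma gpow_oppM_conjg x y a b :
  gmul (gpow x (- a)) (gpow y (- b))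
  = conjg (gpow x (- a)) (ginv (gmul (gpow x a) (gpow y b))).
Proof.
  unfold conjg. rewrite !gpow_opp, invMg, invgK, <- !gmul_assoc, gmul_Vl, gmul_1r.
  reflexivity.
Qed.

Lemma normal_closure_self (c : G) : normal_closure c c.
Proof. intros S _ _ Sc. exact Sc. Qed.

End GroupFacts.

Section Morphism.
Variables G H : Group.
Variable pi : G -> H.
Hypothesis hom : group_hom pi.

Lemma hom_one : pi gone = gone.
Proof.
  rewrite <- (mulKg (pi gone) (pi gone)), <- hom, gmul_1l, gmul_Vl. reflexivity.
Qed.

Lemma hom_inv x : pi (ginv x) = ginv (pi x).
Proof. apply ginv_uniq. rewrite <- hom, gmul_Vr. apply hom_one. Qed.

Lemma hom_pow x n : pi (gpow x n) = gpow (pi x) n.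
Proof.
  assert (hom_pow_pos : forall m, pi (gpow_pos x m) = gpow_pos (pi x) m).
  { intro m. unfold gpow_pos.
    rewrite (Pos.iter_swap_gen _ _ pi (fun h => gmul x h) (fun h => gmul (pi x) h)).
    - rewrite hom_one. reflexivity.
    - intro a. apply hom. }
  destruct n; simpl.
  - apply hom_one.
  - apply hom_pow_pos.
  - rewrite hom_inv, hom_pow_pos. reflexivity.
Qed.

Lemma hom_conjg g x : pi (conjg g x) = conjg (pi g) (pi x).
Proof. unfold conjg. rewrite !hom, hom_inv. reflexivity. Qed.

End Morphism.

Definition residue_core {G : Group} (le : G -> G -> Prop) (x : G) : Prop :=
  forall g, residue le (conjg g x).

Lemma strongly_detectedE (G : Group) (le : G -> G -> Prop) (mu lam : G) (a b : Z) :
  strongly_detected le mu lam (a, b)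
  <-> residue_core le (gmul (gpow mu a) (gpow lam b)).
Proof. reflexivity. Qed.

Section Residue.
Variable G : Group.
Variable le : G -> G -> Prop.
Hypothesis le_refl : forall x, le x x.
Hypothesis le_trans : forall x y z, le x y -> le y z -> le x z.
Hypothesis le_linv : forall x y g, le x y -> le (gmul g x) (gmul g y).

Lemma le_cancel x y g : le (gmul g x) (gmul g y) -> le x y.
Proof. intro E. apply (le_linv (ginv g)) in E. rewrite !mulKg in E. exact E. Qed.

Lemma residue1 : residue le gone.
Proof. split; apply le_refl. Qed.

Lemma residueM x y : residue le x -> residue le y -> residue le (gmul x y).
Proof.
  intros [x_le1 one_lex] [y_le1 one_ley]. split.
  - apply (le_trans (y := x)); [|exact x_le1].
    rewrite <- (gmul_1r G x) at 2. apply le_linv, y_le1.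
  - apply (le_trans (y := x)); [exact one_lex|].
    rewrite <- (gmul_1r G x) at 1. apply le_linv, one_ley.
Qed.

Lemma residueV x : residue le x -> residue le (ginv x).
Proof.
  intros [x_le1 one_lex].
  split; apply (le_cancel (g := x)); rewrite gmul_Vr, gmul_1r; assumption.
Qed.

Lemma residue_mulVg_le x y : residue le (gmul (ginv x) y) -> le x y.
Proof.
  intros [_ one_le]. apply (le_cancel (g := ginv x)). rewrite gmul_Vl. exact one_le.
Qed.

Lemma residue_core_subgroup : subgroup (residue_core le).
Proof.
  split; [|split].
  - intro g. rewrite conjg1. apply residue1.
  - intros x y Rx Ry g. rewrite conjgM. apply residueM; auto.
  - intros x Rx g. rewrite conjgV. apply residueV, Rx.
Qed.

Lemma residue_core_normal : normal (residue_core le).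
Proof.
  intros g x Rx h. change (residue le (conjg h (conjg g x))).
  rewrite <- conjg_mul. apply Rx.
Qed.

Lemma normal_closure_residue c x :
  residue_core le c -> normal_closure c x -> residue le x.
Proof.
  intros Rc ncl_x.
  pose proof (ncl_x _ residue_core_subgroup residue_core_normal Rc gone) as Rx.
  unfold conjg in Rx. rewrite gmul_1l, invg1, gmul_1r in Rx. exact Rx.
Qed.

Lemma strongly_detected_opp mu lam a b :
  strongly_detected le mu lam (- a, - b)%Z -> strongly_detected le mu lam (a, b).
Proof.
  rewrite !strongly_detectedE. intro R.
  rewrite <- (Z.opp_involutive a), <- (Z.opp_involutive b), gpow_oppM_conjg.
  apply residue_core_normal, residue_core_subgroup, R.
Qed.

Lemma strongly_detected_sign mu lam a b s :
  s = (a, b) \/ s = (- a, - b)%Z ->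
  strongly_detected le mu lam s <-> strongly_detected le mu lam (a, b).
Proof.
  intros [-> | ->]; [reflexivity|]. split; [apply strongly_detected_opp|].
  intro D. apply strongly_detected_opp. rewrite !Z.opp_involutive. exact D.
Qed.

End Residue.

Section Pullback.
Variables G H : Group.
Variable pi : G -> H.
Hypothesis hom : group_hom pi.
Hypothesis surj : forall h : H, exists g, pi g = h.
Variable le0 : G -> G -> Prop.
Variable le : H -> H -> Prop.
Hypothesis compat : forall a b, le (pi a) (pi b) <-> le0 a b.

Lemma residue_pullback x : residue le (pi x) <-> residue le0 x.
Proof. unfold residue. rewrite <- (hom_one hom), !compat. reflexivity. Qed.

Lemma left_total_preorder_pullback :
  left_total_preorder le0 <-> left_total_preorder le.
Proof.
  split.
  - intros (refl & trans & total & linv & x0 & y0 & nle).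
    split; [|split; [|split; [|split]]].
    + intro x. destruct (surj x) as [a <-]. apply compat, refl.
    + intros x y z. destruct (surj x) as [a <-], (surj y) as [b <-], (surj z) as [d <-].
      rewrite !compat. apply trans.
    + intros x y. destruct (surj x) as [a <-], (surj y) as [b <-].
      rewrite !compat. apply total.
    + intros x y g. destruct (surj x) as [a <-], (surj y) as [b <-], (surj g) as [d <-].
      rewrite <- !hom, !compat. apply linv.
    + exists (pi x0), (pi y0). rewrite compat. exact nle.
  - intros (refl & trans & total & linv & x0 & y0 & nle).
    split; [|split; [|split; [|split]]].
    + intro a. apply compat, refl.
    + intros a b d. rewrite <- !compat. apply trans.
    + intros a b. rewrite <- !compat. apply total.
    + intros a b d. rewrite <- !compat, !hom. apply linv.
    + destruct (surj x0) as [a <-], (surj y0) as [b <-].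
      exists a, b. rewrite <- compat. exact nle.
Qed.

Lemma weakly_detected_pullback mu lam s :
  weakly_detected le0 mu lam s <-> weakly_detected le (pi mu) (pi lam) s.
Proof.
  assert (E : forall m n, le gone (gmul (gpow (pi mu) m) (gpow (pi lam) n))
                          <-> le0 gone (gmul (gpow mu m) (gpow lam n))).
  { intros m n. rewrite <- !(hom_pow hom), <- hom, <- (hom_one hom). apply compat. }
  destruct s as [x y]. unfold weakly_detected.
  split; intros W p1 q1 p2 q2 H1 slope; apply E; apply (W p1 q1); auto; apply E, H1.
Qed.

Lemma strongly_detected_pullback mu lam s :
  strongly_detected le0 mu lam s <-> strongly_detected le (pi mu) (pi lam) s.
Proof.
  destruct s as [a b]. rewrite !strongly_detectedE, <- !(hom_pow hom), <- hom.
  split.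
  - intros R h. destruct (surj h) as [g <-]. rewrite <- (hom_conjg hom).
    apply residue_pullback, R.
  - intros R g. apply residue_pullback. rewrite (hom_conjg hom). apply R.
Qed.

End Pullback.

Definition pushforward {G H : Group} (pi : G -> H) (le0 : G -> G -> Prop) (h1 h2 : H) :=
  exists g1 g2, pi g1 = h1 /\ pi g2 = h2 /\ le0 g1 g2.

Section Pushforward.
Variables G H : Group.
Variable pi : G -> H.
Hypothesis hom : group_hom pi.
Variable le0 : G -> G -> Prop.
Hypothesis le0_trans : forall x y z, le0 x y -> le0 y z -> le0 x z.
Hypothesis le0_linv : forall x y g, le0 x y -> le0 (gmul g x) (gmul g y).
Hypothesis kernel_residue : forall g, pi g = gone -> residue le0 g.

Lemma le_of_pi_eq a b : pi a = pi b -> le0 a b.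
Proof.
  intro E. apply (residue_mulVg_le le0_linv), kernel_residue.
  rewrite hom, (hom_inv hom), E. apply gmul_Vl.
Qed.

Lemma pushforward_pi a b : pushforward pi le0 (pi a) (pi b) <-> le0 a b.
Proof.
  split.
  - intros (g1 & g2 & e1 & e2 & le12).
    apply (le0_trans (le_of_pi_eq (eq_sym e1))).
    apply (le0_trans le12), le_of_pi_eq, e2.
  - intro le_ab. exists a, b. auto.
Qed.

End Pushforward.

Theorem theorem2p3
  (G H : Group) (I J : Type)
  (muI lamI : I -> G) (muJ lamJ : J -> G)
  (hcI : forall i, commute (muI i) (lamI i))
  (hcJ : forall j, commute (muJ j) (lamJ j))
  (j0 : J) (p q : Z) (hpq : Z.gcd p q = 1%Z)
  (pi : G -> H)
  (hpi : is_quotient_by_ncl pi (gmul (gpow (muJ j0) p) (gpow (lamJ j0) q)))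
  (sI : I -> R * R) (sJ : J -> Z * Z)
  (hsI : forall i, sI i <> (0%R, 0%R))
  (hsJ : forall j, Z.gcd (fst (sJ j)) (snd (sJ j)) = 1%Z)
  (hs0 : sJ j0 = (p, q) \/ sJ j0 = (- p, - q)%Z) :
  (exists le0 : G -> G -> Prop, left_total_preorder le0 /\
     (forall i, weakly_detected le0 (muI i) (lamI i) (sI i)) /\
     (forall j, strongly_detected le0 (muJ j) (lamJ j) (sJ j)))
  <->
  (exists le : H -> H -> Prop, left_total_preorder le /\
     (forall i, weakly_detected le (pi (muI i)) (pi (lamI i)) (sI i)) /\
     (forall j, j <> j0 ->
        strongly_detected le (pi (muJ j)) (pi (lamJ j)) (sJ j))).
Proof.
  destruct hpi as (hom & surj & ker).
  split.
  - intros (le0 & hle0 & hw & hs).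
    pose proof hle0 as (refl & trans & _ & linv & _).
    assert (compat : forall a b, pushforward pi le0 (pi a) (pi b) <-> le0 a b).
    { apply (pushforward_pi hom trans linv). intros g pi_g.
      apply ker in pi_g. revert pi_g. apply (normal_closure_residue refl trans linv).
      apply (strongly_detected_sign refl trans linv _ _ hs0), hs. }
    exists (pushforward pi le0). split; [|split].
    + apply (left_total_preorder_pullback hom surj compat), hle0.
    + intro i. apply (weakly_detected_pullback hom compat), hw.
    + intros j _. apply (strongly_detected_pullback hom surj compat), hs.
  - intros (le & hle & hw & hs).
    pose proof hle as (refl & trans & _ & linv & _).
    assert (compat : forall a b, le (pi a) (pi b) <-> le (pi a) (pi b)) by tauto.
    exists (fun a b => le (pi a) (pi b)). split; [|split].
    + apply (left_total_preorder_pullback hom surj compat), hle.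
    + intro i. apply (weakly_detected_pullback hom compat), hw.
    + intro j. apply (strongly_detected_pullback hom surj compat).
      destruct (classic (j = j0)) as [-> | ne]; [|apply hs, ne].
      apply (strongly_detected_sign refl trans linv _ _ hs0), strongly_detectedE.
      rewrite <- !(hom_pow hom), <- hom, (proj2 (ker _) (@normal_closure_self _ _)).
      apply (residue_core_subgroup refl trans linv).
Qed.
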